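(* Let $\mathcal H$ be an $n$-vertex linear hypergraph and let $\{A,B\}$ be a partition of the edge set of $\mathcal H$ such that $|A|+|B|-n \le |A|/4$. If for every two distinct intersecting edges $e,f\in A$ the pair $\{e,f\}$ is useful, then $\mathcal H$ has a proper edge-colouring with $n$ colours in which each colour is assigned to at most two edges.
   Context: A hypergraph has a finite vertex set and a set of nonempty edges; linear means any two distinct edges share at most one vertex. For an edge $e$, $N(e)$ denotes the set of edges $f\ne e$ of $\mathcal H$ with $f\cap e\ne\varnothing$. In an $n$-vertex hypergraph, a pair $\{e,f\}\subseteq\mathcal H$ is useful if $e\ne f$, $e\cap f\ne\varnothing$, and $|N(e)\cap N(f)|\le n-2$. A proper edge-colouring assigns colours to edges so that distinct intersecting edges get different colours. *)

From mathcomp Require Import all_boot.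
Set Implicit Arguments. Unset Strict Implicit. Unset Printing Implicit Defensive.

(* A hypergraph on the finite vertex type T is a set H of edges (subsets of T).
   The number of vertices n is #|T|. *)

Definition hypergraph (T : finType) (H : {set {set T}}) : Prop :=
  forall e, e \in H -> e != set0.

Definition linear_hg (T : finType) (H : {set {set T}}) : Prop :=
  forall e f, e \in H -> f \in H -> e != f -> #|e :&: f| <= 1.

Definition nbhd (T : finType) (H : {set {set T}}) (e : {set T}) : {set {set T}} :=
  [set f in H | (f != e) && (f :&: e != set0)].

(* useful pair in an n-vertex hypergraph, n = #|T|; |N(e) ∩ N(f)| <= n - 2
   written as |N(e) ∩ N(f)| + 2 <= n to avoid truncated subtraction *)
Definition useful (T : finType) (H : {set {set T}}) (e f : {set T}) : Prop :=
  [/\ e \in H, f \in H, e != f, e :&: f != set0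
    & #|nbhd H e :&: nbhd H f| + 2 <= #|T|].

Definition proper_colouring (T : finType) (H : {set {set T}}) (k : nat)
    (c : {set T} -> nat) : Prop :=
  (forall e, e \in H -> c e < k) /\
  (forall e f, e \in H -> f \in H -> e != f -> e :&: f != set0 -> c e != c f).

From mathcomp Require Import all_boot zify.
From Stdlib Require Classical_Prop Wf_nat.
Set Implicit Arguments. Unset Strict Implicit. Unset Printing Implicit Defensive.

(* Call a colouring a pair colouring if each colour class is a single edge or
   two disjoint edges; the identity colouring is one.  Take a pair colouring
   with the fewest colours.  It admits no improving move: two lone edges
   (alone in their colour) always intersect, and there is no augmenting
   configuration (lone u1, u2 and a class {x, y} with x missing u1 and y
   missing u2).  Counting then shows that if there were more than n colours,
   A would contain two lone edges e, f that are not "pointed" (no class of two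
   edges avoids them).  They intersect, and every edge meeting only one of them
   lies in a different two-edge class, so |H| <= |N(e) /\ N(f)| + 2 + #classes;
   usefulness of {e, f} then contradicts the colour count.  Finally the colours
   are renumbered by 0, ..., n-1. *)

Lemma card_imset_lt (K C : finType) (X : {set K}) (c c' : K -> C) x :
  x \in X -> (forall g, g \in X -> (c' g \in c @: X) && (c' g != c x)) ->
  #|c' @: X| < #|c @: X|.
Proof.
move=> Xx hc'; rewrite [X in _ < X](cardsD1 (c x)) (imset_f c Xx) add1n ltnS.
apply/subset_leq_card/subsetP => _ /imsetP [g Xg ->].
by have /andP[gc gx] := hc' g Xg; rewrite !inE gc gx.
Qed.

Lemma card_le_unique_witness (K L : finType) (P : {set K}) (Q : {set L})
    (R : K -> L -> bool) :
  (forall a, a \in P -> exists2 b, b \in Q & R a b) ->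
  (forall a a' b, a \in P -> a' \in P -> R a b -> R a' b -> a = a') ->
  #|P| <= #|Q|.
Proof.
move=> hex huniq; pose f a := [pick b in Q | R a b].
have fP a : a \in P -> exists2 b, f a = Some b & (b \in Q) && R a b.
  move=> Pa; rewrite /f; case: pickP => [b hb|none]; first by exists b.
  by have [b Qb Rab] := hex a Pa; move: (none b); rewrite Qb Rab.
have f_inj : {in P &, injective f}.
  move=> a a' Pa Pa'; have [b -> /andP[_ Rab]] := fP a Pa.
  have [b' -> /andP[_ Rab']] := fP a' Pa' => -[eb].
  by apply: (huniq _ _ b Pa Pa' Rab); rewrite eb.
rewrite -(card_in_imset f_inj) -(card_imset Q (@Some_inj _)).
apply/subset_leq_card/subsetP => _ /imsetP [a Pa ->].
by have [b -> /andP[Qb _]] := fP a Pa; rewrite imset_f.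
Qed.

Lemma card_imset_paired (K L : finType) (X : {set K}) (f : K -> L) :
  (forall g, g \in X -> exists2 g', g' \in X & (g' != g) && (f g' == f g)) ->
  2 * #|f @: X| <= #|X|.
Proof.
move=> hp; rewrite -[#|X|]sum1_card (partition_big_imset f) /= mulnC -sum_nat_const.
apply: leq_sum => _ /imsetP [g Hg ->]; have [g' Hg' /andP[ne fe]] := hp g Hg.
rewrite (bigD1 g) /=; last by rewrite Hg eqxx.
rewrite (bigD1 g') /=; last by rewrite Hg' fe ne.
by rewrite addnA leq_addr.
Qed.

Lemma exists_minimal (X : Type) (P : X -> Prop) (m : X -> nat) :
  (exists x, P x) -> exists2 x, P x & forall y, P y -> m x <= m y.
Proof.
move=> [x0 Px0].
have [k [[[x Px <-] kmin] _]] := Wf_nat.dec_inh_nat_subset_has_unique_least_element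
  (fun k => exists2 x, P x & m x = k) (fun k => Classical_Prop.classic _)
  (ex_intro _ (m x0) (ex_intro2 _ _ x0 Px0 erefl)).
by exists x => // y Py; apply/leP/kmin; exists y.
Qed.

Lemma index_enum_inj (K : finType) (X : {set K}) x y :
  x \in X -> y \in X -> index x (enum X) = index y (enum X) -> x = y.
Proof.
move=> Xx Xy /(congr1 (nth x (enum X))); by rewrite !nth_index ?mem_enum.
Qed.

Section PairColourings.

Variables (T C : finType) (H : {set {set T}}).
Implicit Types (c : {set T} -> C) (e f g u x y : {set T}).

(* Every colour class is either a single edge or two disjoint edges. *)
Definition pair_colouring c : Prop :=
  forall e, e \in H -> exists2 w, w = e \/ e :&: w = set0 &
    forall g, g \in H -> c g = c e -> g = e \/ g = w.

Definition alone c u : bool := [forall g in H, (c g == c u) ==> (g == u)].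

Lemma aloneP c u g : alone c u -> g \in H -> c g = c u -> g = u.
Proof. by move=> /forall_inP hu Hg /eqP cg; apply/eqP/(implyP (hu g Hg)). Qed.

Lemma aloneI c u : (forall g, g \in H -> c g = c u -> g = u) -> alone c u.
Proof. by move=> hu; apply/forall_inP => g Hg; apply/implyP => /eqP/(hu g Hg) ->. Qed.

Definition recolour c x (k : C) g : C := if g == x then k else c g.

Section Recolour.

Variable c : {set T} -> C.
Hypothesis pc : pair_colouring c.

Lemma pc_disjoint e f : e \in H -> f \in H -> e != f -> c e = c f -> e :&: f = set0.
Proof.
move=> He Hf ef cef; have [w hw hcls] := pc He.
have [fe|fw] := hcls f Hf (esym cef); first by rewrite fe eqxx in ef.
rewrite fw; case: hw => [we|//]; by rewrite fw we eqxx in ef.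
Qed.

Lemma pc_two e f g : e \in H -> f \in H -> g \in H -> e != f ->
  c e = c f -> c g = c e -> g = e \/ g = f.
Proof.
move=> He Hf Hg ef cef cge; have [w _ hcls] := pc He.
have [fe|fw] := hcls f Hf (esym cef); first by rewrite fe eqxx in ef.
by rewrite fw; exact: hcls.
Qed.

Lemma recolour_pair_colouring u x : u \in H -> alone c u -> x :&: u = set0 ->
  pair_colouring (recolour c x (c u)).
Proof.
move=> Hu au dxu z Hz; rewrite /recolour; case: (eqVneq z x) => [->|zx].
  exists u; first by right.
  move=> g Hg; case: eqVneq => [->|_ /(aloneP au Hg) ->]; by [left | right].
case: (eqVneq z u) => [->|zu].
  exists x; first by right; rewrite setIC.
  move=> g Hg; case: eqVneq => [->|_ /(aloneP au Hg) ->]; by [right | left].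
have [w hw hcls] := pc Hz; exists w => // g Hg.
case: eqVneq => [_ cz|_]; last exact: hcls.
by rewrite (aloneP au Hz (esym cz)) eqxx in zu.
Qed.

Lemma merge_lonely u1 u2 : u1 \in H -> u2 \in H -> alone c u1 -> alone c u2 ->
  u1 != u2 -> u1 :&: u2 = set0 ->
  exists2 c', pair_colouring c' & #|c' @: H| < #|c @: H|.
Proof.
move=> H1 H2 a1 a2 u12 d12; exists (recolour c u2 (c u1)).
  by apply: recolour_pair_colouring; rewrite // setIC.
apply: (card_imset_lt H2) => g Hg; rewrite /recolour.
case: eqVneq => [_|gu2]; rewrite imset_f //=.
  by apply: contra u12 => /eqP/(aloneP a2 H1) ->.
by apply: contra gu2 => /eqP/(aloneP a2 Hg) ->.
Qed.

Lemma transfer u x y : u \in H -> x \in H -> y \in H -> alone c u ->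
  x != y -> c x = c y -> x :&: u = set0 ->
  [/\ pair_colouring (recolour c x (c u)),
       #|recolour c x (c u) @: H| <= #|c @: H|,
       alone (recolour c x (c u)) y
     & forall v, v \in H -> alone c v -> v != u -> alone (recolour c x (c u)) v].
Proof.
move=> Hu Hx Hy au xy cxy dxu; split; first exact: recolour_pair_colouring.
- apply/subset_leq_card/subsetP => _ /imsetP [g Hg ->].
  by rewrite /recolour; case: eqVneq => _; rewrite imset_f.
- have cyu : c y != c u.
    by apply: contra xy => /eqP cyu; rewrite (aloneP au Hx (etrans cxy cyu)) (aloneP au Hy cyu).
  have yx : y != x by rewrite eq_sym.
  apply: aloneI => g Hg; rewrite /recolour (negbTE yx).
  case: eqVneq => [_ cuy|gx cg]; first by rewrite cuy eqxx in cyu.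
  by have [gx'|//] := pc_two Hx Hy Hg xy cxy (etrans cg (esym cxy)); rewrite gx' eqxx in gx.
- move=> v Hv av vu; have vx : v != x.
    by apply: contra xy => /eqP vx; rewrite (aloneP av Hy _) -?vx // -cxy vx.
  apply: aloneI => g Hg; rewrite /recolour (negbTE vx).
  case: eqVneq => [_ cuv|_]; last exact: aloneP av Hg.
  by rewrite (aloneP av Hu cuv) eqxx in vu.
Qed.

End Recolour.

(* Augmenting configuration: lone edges u1 != u2 and a class {x, y} with x
   missing u1 and y missing u2.  Transferring x to u1 makes y lone, and y can
   then merge with u2, saving a colour. *)
Lemma augment c u1 u2 x y : hypergraph H -> pair_colouring c ->
  u1 \in H -> u2 \in H -> x \in H -> y \in H ->
  alone c u1 -> alone c u2 -> u1 != u2 -> x != y -> c x = c y ->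
  x :&: u1 = set0 -> y :&: u2 = set0 ->
  exists2 c', pair_colouring c' & #|c' @: H| < #|c @: H|.
Proof.
move=> hg pc H1 H2 Hx Hy a1 a2 u12 xy cxy dx dy.
have [pc' le_c' ay a'] := transfer pc H1 Hx Hy a1 xy cxy dx.
have yu2 : y != u2 by apply/eqP => yu2; move: (hg y Hy); rewrite -dy yu2 setIid eqxx.
have a2' : alone (recolour c x (c u1)) u2 by apply: a' => //; rewrite eq_sym.
have [c'' pc'' lt_c''] := merge_lonely pc' Hy H2 ay a2' yu2 dy.
by exists c'' => //; apply: leq_trans le_c'.
Qed.

Definition far e f : {set {set T}} :=
  [set g in H | [&& g != e, g != f & (g :&: e == set0) || (g :&: f == set0)]].

(* Every edge other than e, f meets both (so lies in N(e) /\ N(f)) or is far. *)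
Lemma card_le_common_far e f : e \in H -> f \in H ->
  #|H| <= #|nbhd H e :&: nbhd H f| + #|far e f| + 2.
Proof.
move=> He Hf; have cover : H \subset (nbhd H e :&: nbhd H f) :|: far e f :|: [set e; f].
  apply/subsetP => g Hg; rewrite /nbhd !inE Hg /=.
  by case: (g == e); case: (g == f); case: (g :&: e == set0); case: (g :&: f == set0).
apply: leq_trans (subset_leq_card cover) _; apply: leq_trans (leq_card_setU _ _) _.
by apply: leq_add; [exact: leq_card_setU | rewrite cards2; case: (e != f)].
Qed.

Section LocallyOptimal.

Variable c : {set T} -> C.
Hypothesis pc : pair_colouring c.
Hypothesis lonely_meet : forall u1 u2, u1 \in H -> u2 \in H ->
  alone c u1 -> alone c u2 -> u1 != u2 -> u1 :&: u2 != set0.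
Hypothesis no_augment : forall u1 u2 x y, u1 \in H -> u2 \in H -> x \in H -> y \in H ->
  alone c u1 -> alone c u2 -> u1 != u2 -> x != y -> c x = c y ->
  x :&: u1 = set0 -> y :&: u2 != set0.

Definition lonely : {set {set T}} := [set u in H | alone c u].
Definition paired : {set {set T}} := [set g in H | ~~ alone c g].

Definition pointed_by u (k : C) : bool :=
  [exists x in H, exists y in H,
    [&& x != y, c x == k, c y == k, x :&: u == set0 & y :&: u == set0]].

Definition pointed u : bool := [exists k, pointed_by u k].

Lemma card_lonely_paired : #|lonely| + #|paired| = #|H|.
Proof.
rewrite -(cardsID [set u | alone c u] H).
by congr (_ + _); apply: eq_card => u; rewrite !inE // andbC.
Qed.

Lemma card_paired_colours : 2 * #|c @: paired| <= #|paired|.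
Proof.
apply: card_imset_paired => g; rewrite inE => /andP[Hg].
rewrite negb_forall_in => /exists_inP [g' Hg']; rewrite negb_imply => /andP[cg' g'g].
exists g' => //; last by rewrite g'g cg'.
rewrite inE Hg'; apply: contra g'g => ag'.
by rewrite (aloneP ag' Hg (esym (eqP cg'))).
Qed.

Lemma card_colours_le : #|c @: H| <= #|lonely| + #|c @: paired|.
Proof.
have -> : H = lonely :|: paired.
  by apply/setP => g; rewrite !inE -andb_orr orbN andbT.
rewrite imsetU; apply: leq_trans (leq_card_setU _ _) _.
by rewrite leq_add2r leq_imset_card.
Qed.

Lemma pointedI u x y : x \in H -> y \in H -> x != y -> c x = c y ->
  x :&: u = set0 -> y :&: u = set0 -> pointed u.
Proof.
move=> Hx Hy xy cxy dx dy; apply/existsP; exists (c x).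
by apply/exists_inP; exists x => //; apply/exists_inP; exists y; rewrite // xy cxy dx dy !eqxx.
Qed.

Lemma pointed_by_paired u k : pointed_by u k -> k \in c @: paired.
Proof.
move=> /exists_inP [x Hx /exists_inP [y Hy /and5P [xy /eqP cx /eqP cy _ _]]].
rewrite -cx imset_f // inE Hx; apply: contra xy => ax.
by rewrite (aloneP ax Hy (etrans cy (esym cx))).
Qed.

(* Without augmenting configurations, a class points at most one lone edge. *)
Lemma pointed_by_unique u1 u2 k : u1 \in lonely -> u2 \in lonely ->
  pointed_by u1 k -> pointed_by u2 k -> u1 = u2.
Proof.
rewrite !inE => /andP[H1 a1] /andP[H2 a2].
move=> /exists_inP [x Hx /exists_inP [y Hy /and5P [xy /eqP cx /eqP cy /eqP dx /eqP dy]]].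
move=> /exists_inP [z Hz /exists_inP [_ _ /and5P [_ /eqP cz _ /eqP dz _]]].
case: (eqVneq u1 u2) => // u12; exfalso.
have [zx|zy] := pc_two pc Hx Hy Hz xy (etrans cx (esym cy)) (etrans cz (esym cx)).
- have yx : y != x by rewrite eq_sym.
  by move: (no_augment H1 H2 Hy Hx a1 a2 u12 yx (etrans cy (esym cx)) dy); rewrite -zx dz eqxx.
- by move: (no_augment H1 H2 Hx Hy a1 a2 u12 xy (etrans cx (esym cy)) dx); rewrite -zy dz eqxx.
Qed.

Lemma card_pointed_le : #|[set u in lonely | pointed u]| <= #|c @: paired|.
Proof.
apply: (@card_le_unique_witness _ _ _ _ pointed_by).
  move=> u; rewrite inE => /andP[_ /existsP [k pk]].
  by exists k => //; exact: pointed_by_paired pk.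
by move=> u1 u2 k /setIdP[l1 _] /setIdP[l2 _]; exact: pointed_by_unique.
Qed.

(* For unpointed lone edges e != f, the far edges are paired and get pairwise
   distinct colours: two far edges of one class would point e or f, or form an
   augmenting configuration. *)
Lemma card_far_le e f : e \in lonely -> f \in lonely -> e != f ->
  ~~ pointed e -> ~~ pointed f -> #|far e f| <= #|c @: paired|.
Proof.
rewrite !inE => /andP[He ae] /andP[Hf af] ef npe npf.
have far_paired : far e f \subset paired.
  apply/subsetP => g; rewrite !inE => /and4P[Hg ge gf dg]; rewrite Hg /=.
  apply/negP => ag; case/orP: dg => /eqP dg.
    by move: (lonely_meet Hg He ag ae ge); rewrite dg eqxx.
  by move: (lonely_meet Hg Hf ag af gf); rewrite dg eqxx.
have far_inj : {in far e f &, injective c}.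
  move=> g g'; rewrite !inE => /and4P[Hg _ _ dg] /and4P[Hg' _ _ dg'] cgg'.
  case: (eqVneq g g') => // gg'; exfalso.
  case/orP: dg => /eqP dg; case/orP: dg' => /eqP dg'.
  - by move/negP: npe; apply; exact: pointedI Hg Hg' gg' cgg' dg dg'.
  - by move: (no_augment He Hf Hg Hg' ae af ef gg' cgg' dg); rewrite dg' eqxx.
  - have fe : f != e by rewrite eq_sym.
    by move: (no_augment Hf He Hg Hg' af ae fe gg' cgg' dg); rewrite dg' eqxx.
  - by move/negP: npf; apply; exact: pointedI Hg Hg' gg' cgg' dg dg'.
by rewrite -(card_in_imset far_inj); apply/subset_leq_card/imsetS.
Qed.

Section Partition.

Variables A B : {set {set T}}.
Hypothesis cover_AB : A :|: B = H.
Hypothesis disjoint_AB : A :&: B = set0.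
Hypothesis few_edges : 4 * (#|A| + #|B|) <= 4 * #|T| + #|A|.

Definition free : {set {set T}} := (lonely :&: A) :\: [set u | pointed u].

Lemma free_many : #|T| < #|c @: H| -> 1 < #|free|.
Proof.
move=> many.
have card_AB : #|A| + #|B| = #|H| by rewrite -cover_AB cardsU disjoint_AB cards0 subn0.
have lonely_A : #|lonely| <= #|lonely :&: A| + #|B|.
  apply: leq_trans (leq_card_setU _ _); apply/subset_leq_card/subsetP => u lu.
  have /setIdP[Hu _] := lu; rewrite in_setU in_setI lu /=.
  by rewrite -cover_AB in_setU in Hu.
have lonely_A_split : #|lonely :&: A| <= #|free| + #|[set u in lonely | pointed u]|.
  rewrite -(cardsID [set u | pointed u] (lonely :&: A)) addnC leq_add2l.
  by apply/subset_leq_card/subsetP => u; rewrite !inE => /andP[/andP[-> _] ->].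
have := card_lonely_paired; have := card_paired_colours; have := card_colours_le.
have := card_pointed_le; lia.
Qed.

(* Two free edges e, f intersect; combining the cover of H by N(e) /\ N(f),
   far edges and {e, f} with usefulness of {e, f} gives at most n colours. *)
Lemma colours_le_vertices :
  (forall e f, e \in A -> f \in A -> e != f -> e :&: f != set0 -> useful H e f) ->
  #|c @: H| <= #|T|.
Proof.
move=> huse; rewrite leqNgt; apply/negP => many.
have /card_gt1P [e [f [fe ff ef]]] := free_many many.
move: fe ff; rewrite !inE => /and3P[npe /andP[He ae] eA] /and3P[npf /andP[Hf af] fA].
have le : e \in lonely by rewrite inE He ae.
have lf : f \in lonely by rewrite inE Hf af.
have [_ _ _ _ common] := huse e f eA fA ef (lonely_meet He Hf ae af ef).
have := card_le_common_far He Hf; have := card_far_le le lf ef npe npf.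
have := card_lonely_paired; have := card_paired_colours; have := card_colours_le.
lia.
Qed.

End Partition.
End LocallyOptimal.

Lemma pair_colouring_nat c k : pair_colouring c -> #|c @: H| <= k ->
  exists c' : {set T} -> nat,
    proper_colouring H k c' /\ (forall i, #|[set e in H | c' e == i]| <= 2).
Proof.
move=> pc few; pose idx e := index (c e) (enum (c @: H)).
have idx_inj e f : e \in H -> f \in H -> idx e = idx f -> c e = c f.
  by move=> He Hf; apply: index_enum_inj; rewrite imset_f.
exists idx; split; first split.
- move=> e He; apply: leq_trans few; rewrite cardE index_mem mem_enum imset_f //.
- move=> e f He Hf ef; apply: contra => /eqP /(idx_inj e f He Hf) cef.
  by rewrite (pc_disjoint pc He Hf ef cef).
- move=> i; case: (set_0Vmem [set e in H | idx e == i]) => [->|[e]]; first by rewrite cards0.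
  rewrite inE => /andP[He /eqP ei]; have [w _ hcls] := pc e He.
  have sub : [set e in H | idx e == i] \subset [set e; w].
    apply/subsetP => g; rewrite !inE => /andP[Hg /eqP gi].
    by case: (hcls g Hg (idx_inj g e Hg He (etrans gi (esym ei)))) => ->; rewrite eqxx ?orbT.
  by apply: leq_trans (subset_leq_card sub) _; rewrite cards2; case: (e != w).
Qed.

End PairColourings.

(* A pair colouring with the fewest colours admits no improving move, hence
   uses at most n colours. *)
Lemma minimal_pair_colouring_le (T : finType) (H A B : {set {set T}}) :
  hypergraph H -> A :|: B = H -> A :&: B = set0 ->
  4 * (#|A| + #|B|) <= 4 * #|T| + #|A| ->
  (forall e f, e \in A -> f \in A -> e != f -> e :&: f != set0 -> useful H e f) ->
  exists2 c : {set T} -> {set T}, pair_colouring H c & #|c @: H| <= #|T|.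
Proof.
move=> hg cover_AB disjoint_AB few_edges huse.
have id_pc : pair_colouring H id by move=> e He; exists e => [|g _ ->]; left.
have [c pc cmin] := exists_minimal (fun c => #|c @: H|) (ex_intro _ _ id_pc).
exists c => //; apply: (colours_le_vertices pc _ _ cover_AB disjoint_AB few_edges huse).
- move=> u1 u2 H1 H2 a1 a2 u12; apply/negP => /eqP d12.
  have [c' pc' lt_c'] := merge_lonely pc H1 H2 a1 a2 u12 d12.
  by move: (cmin c' pc'); rewrite leqNgt lt_c'.
- move=> u1 u2 x y H1 H2 Hx Hy a1 a2 u12 xy cxy dx; apply/negP => /eqP dy.
  have [c' pc' lt_c'] := augment hg pc H1 H2 Hx Hy a1 a2 u12 xy cxy dx dy.
  by move: (cmin c' pc'); rewrite leqNgt lt_c'.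
Qed.

Theorem proposition5p4 (T : finType) (H A B : {set {set T}}) :
  hypergraph H -> linear_hg H ->
  A :|: B = H -> A :&: B = set0 ->
  4 * (#|A| + #|B|) <= 4 * #|T| + #|A| ->
  (forall e f, e \in A -> f \in A -> e != f -> e :&: f != set0 -> useful H e f) ->
  exists c : {set T} -> nat,
    proper_colouring H #|T| c /\
    (forall i, #|[set e in H | c e == i]| <= 2).
Proof.
move=> hg _ cover_AB disjoint_AB few_edges huse.
have [c pc few] := minimal_pair_colouring_le hg cover_AB disjoint_AB few_edges huse.
exact: pair_colouring_nat pc few.
Qed.
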